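(* Let $O\rhd c_1$ and $O\rhd c_2$ be P-markings. Then $O\rhd c_1\sim_{C}O\rhd c_2$ if and only if $[O]_\cong\rhd c_1\alpha_O\sim_{AC}[O]_\cong\rhd c_2\alpha_O$.
   Context: Fix a set $Act$ of action labels and an infinite set $\mathcal{E}$ of event names. A finite $Act$-labelled poset (poset for short) is $O=(X_O,\preccurlyeq_O,l_O)$ with $X_O\subseteq\mathcal{E}$ finite, $\preccurlyeq_O$ a partial order on $X_O$, $l_O\colon X_O\to Act$; $|O|=\{(x,l_O(x)):x\in X_O\}$, $x_a$ denotes $(x,a)$, and $O$ is also regarded as a poset on $|O|$. A morphism is an order- and label-preserving map, acting on labelled events by $\sigma(x_a)=\sigma(x)_a$; an isomorphism is a bijective morphism with morphism inverse. For $K\subseteq|O|$, $\max_O K$ is its set of maximal elements; $K$ is down-closed if $y\in K$, $x\preccurlyeq_O y$ imply $x\in K$. A net $N=(S,T,F,l)$: disjoint sets $S,T$, $F\subseteq(S\times T)\cup(T\times S)$, $l\colon T\to Act$, ${}^\bullet t=\{s:(s,t)\in F\}$, $t^\bullet=\{s:(t,s)\in F\}$ nonempty. Fix $N$. A causal marking is a finite set $c$ of pairs $K\vdash s$ ($s\in S$, $K$ finite $\subseteq\mathcal{E}\times Act$); $\mathcal{K}(c)$ is the union of its cause sets, $|c|$ its set of places, $K\vdash m=\{K\vdash s:s\in m\}$, and $c\sigma=\{\sigma(K)\vdash s:K\vdash s\in c\}$. A P-marking $O\rhd c$: every cause set of $c$ is a down-closed subset of $|O|$. $\delta(O,K,e_a)$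 (for $K\subseteq|O|$, $e\notin X_O$) is $O$ plus the event $e$ with label $a$ above every element of $K$, reflexively-transitively closed. Concrete causal case graph (CG$_C$): smallest transition relation on P-markings with $O\rhd c\cup c'\xrightarrow{K\vdash e_a}\delta(O,K,e_a)\rhd(\mathcal{K}(c)\cup\{e_a\}\vdash t^\bullet)\cup c'$ whenever $t\in T$, $O\rhd c\cup c'$ is a P-marking, $|c|={}^\bullet t$, $a=l(t)$, $e\in\mathcal{E}\setminus X_O$, $K=\max_O\mathcal{K}(c)$. A concrete causal bisimulation is a family $\{R_O\}$ of relations on P-markings indexed by posets such that: if $(O_1\rhd c_1,O_2\rhd c_2)\in R_O$ then $O_1=O_2=O$; and if $(O\rhd c_1,O\rhd c_2)\in R_O$ and $O\rhd c_1\xrightarrow{K\vdash e_a}O'\rhd c_1'$ then $O\rhd c_2\xrightarrow{K\vdash e_a}O'\rhd c_2'$ for some $c_2'$ with $(O'\rhd c_1',O'\rhd c_2')\in R_{O'}$, and vice versa. $\sim_C$ is the greatest one. Abstract setting: for each poset $O$ fix a canonical representative $[O]_\cong$ of its isomorphism class and an isomorphism $\alpha_O\colon O\to[O]_\cong$; $O$ is abstract if $[O]_\cong=O$, and an abstract P-marking is one whose poset is abstract. For abstract $O$, $K\subseteq|O|$, $a\in Act$: $\delta(O,K,a)=[\delta(O,K,e_a)]_\cong$ (any $e\notin X_O$), $new(O,K,a)$ is the element of $\delta(O,K,a)$ corresponding to the added event and $old(O,K,a)\colon O\to\delta(O,K,a)$ the embedding corresponding to the inclusion of $O$ (fixed choices).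 For a CG$_C$ transition $O\rhd c\xrightarrow{K\vdash e_a}\delta(O,K,e_a)\rhd c'$, let $c'_{O,K,e_a}$ be $c'$ renamed by the isomorphism $\delta(O,K,e_a)\to\delta([O]_\cong,\alpha_O(K),a)$ sending $x\in X_O$ to $old([O]_\cong,\alpha_O(K),a)(\alpha_O(x))$ and $e_a$ to $new([O]_\cong,\alpha_O(K),a)$. The abstract causal case graph (CG$_{AC}$) has a transition $[O]_\cong\rhd c\alpha_O\stackrel{\alpha_O(K)\vdash a}{\Longrightarrow}\delta([O]_\cong,\alpha_O(K),a)\rhd c'_{O,K,e_a}$ for each such CG$_C$ transition. An abstract causal bisimulation is a family $\{R_O\}$ indexed by abstract posets of relations on abstract P-markings such that: $(O_1\rhd c_1,O_2\rhd c_2)\in R_O$ implies $O_1=O_2=O$; and if $(O\rhd c_1,O\rhd c_2)\in R_O$ and $O\rhd c_1\stackrel{K\vdash a}{\Longrightarrow}O'\rhd c_1'$ then $O\rhd c_2\stackrel{K\vdash a}{\Longrightarrow}O'\rhd c_2'$ with $(O'\rhd c_1',O'\rhd c_2')\in R_{O'}$, and vice versa. $\sim_{AC}$ is the greatest one. *)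

From HB Require Import structures.
From mathcomp Require Import all_boot.
From mathcomp Require Import finmap.

Set Implicit Arguments.
Unset Strict Implicit.
Unset Printing Implicit Defensive.

Local Open Scope fset_scope.

Section Causal.

Variables (E Act : choiceType).

Definition lev := (E * Act)%type.

(* A finite Act-labelled poset, represented by its set |O| of labelled
   events and its order relation as a finite set of pairs on |O|.
   (Leibniz equality of this representation = equality of labelled posets.) *)
Definition poset := ({fset lev} * {fset (lev * lev)})%type.

Definition evX (O : poset) : {fset E} := [fset x.1 | x in O.1].

Definition wf_poset (O : poset) : Prop :=
  (forall x a b, (x, a) \in O.1 -> (x, b) \in O.1 -> a = b) /\
  (forall u v, (u, v) \in O.2 -> u \in O.1 /\ v \in O.1) /\
  (forall u, u \in O.1 -> (u, u) \in O.2) /\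
  (forall u v, (u, v) \in O.2 -> (v, u) \in O.2 -> u = v) /\
  (forall u v w, (u, v) \in O.2 -> (v, w) \in O.2 -> (u, w) \in O.2).

Definition maxs (O : poset) (K : {fset lev}) : {fset lev} :=
  [fset u in K | ~~ has (fun v => (v != u) && ((u, v) \in O.2)) K].

Definition down_closed (O : poset) (K : {fset lev}) : Prop :=
  K `<=` O.1 /\ (forall u v, v \in K -> (u, v) \in O.2 -> u \in K).

(* delta(O,K,e_a): O plus e_a above every element of K, refl.-trans. closed.
   For a poset O and K a subset of |O| the reflexive-transitive closure is
   exactly: old order, pairs (u, e_a) with u below some element of K, and
   (e_a, e_a). *)
Definition delta (O : poset) (K : {fset lev}) (e : E) (a : Act) : poset :=
  ((e, a) |` O.1,
   O.2 `|` [fset (u, (e, a)) | u in [fset u in O.1 | has (fun k => (u, k) \in O.2) K]]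
       `|` [fset ((e, a), (e, a))]).

Definition lrename (s : E -> E) (u : lev) : lev := (s u.1, u.2).
Definition srename (s : E -> E) (K : {fset lev}) : {fset lev} :=
  [fset lrename s u | u in K].

Definition morphism (O O' : poset) (s : E -> E) : Prop :=
  (forall u, u \in O.1 -> lrename s u \in O'.1) /\
  (forall u v, (u, v) \in O.2 -> (lrename s u, lrename s v) \in O'.2).

Definition iso (O O' : poset) (s : E -> E) : Prop :=
  morphism O O' s /\
  exists t : E -> E, morphism O' O t /\
    (forall x, x \in evX O -> t (s x) = x) /\
    (forall y, y \in evX O' -> s (t y) = y).

Variable S T : choiceType.

Record net := Net { pre : T -> {fset S}; post : T -> {fset S}; lab : T -> Act }.

Definition wf_net (N : net) : Prop :=
  forall t, pre N t != fset0 /\ post N t != fset0.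

Definition cmark := {fset ({fset lev} * S)}.

Definition causes (c : cmark) : {fset lev} := \bigcup_(p <- c) p.1.
Definition places (c : cmark) : {fset S} := [fset p.2 | p in c].
Definition mk (K : {fset lev}) (m : {fset S}) : cmark := [fset (K, s) | s in m].
Definition crename (s : E -> E) (c : cmark) : cmark :=
  [fset (srename s p.1, p.2) | p in c].

Definition pmark := (poset * cmark)%type.

Definition is_pmark (p : pmark) : Prop :=
  wf_poset p.1 /\ forall k, k \in p.2 -> down_closed p.1 k.1.

Definition tlabel := ({fset lev} * lev)%type.

Definition stepC (N : net) (p : pmark) (lb : tlabel) (q : pmark) : Prop :=
  exists (t : T) (c c' : cmark),
    is_pmark p /\ p.2 = c `|` c' /\ places c = pre N t /\
    lb.2.2 = lab N t /\ lb.2.1 \notin evX p.1 /\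
    lb.1 = maxs p.1 (causes c) /\
    q = (delta p.1 lb.1 lb.2.1 lb.2.2,
         mk (causes c `|` [fset lb.2]) (post N t) `|` c').

Definition cbisim (N : net) (R : poset -> pmark -> pmark -> Prop) : Prop :=
  forall O p q, R O p q ->
    is_pmark p /\ is_pmark q /\ p.1 = O /\ q.1 = O /\
    (forall lb p', stepC N p lb p' ->
       exists q', stepC N q lb q' /\ q'.1 = p'.1 /\ R p'.1 p' q') /\
    (forall lb q', stepC N q lb q' ->
       exists p', stepC N p lb p' /\ p'.1 = q'.1 /\ R q'.1 p' q').

(* O |> c1 ~_C O |> c2, i.e. membership in the O-component of the greatest
   concrete causal bisimulation *)
Definition simC (N : net) (O : poset) (p q : pmark) : Prop :=
  exists R, cbisim N R /\ R O p q.

(* The abstract setting: canonical representatives [O], isomorphisms alpha_O,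
   and fixed choices new(O,K,a), old(O,K,a). *)
Record abs_setting := AbsSetting {
  canon : poset -> poset;
  alpha : poset -> E -> E;
  newf  : poset -> {fset lev} -> Act -> E;
  oldf  : poset -> {fset lev} -> Act -> E -> E }.

Definition wf_setting (A : abs_setting) : Prop :=
  (forall O, wf_poset O -> wf_poset (canon A O)) /\
  (forall O, wf_poset O -> iso O (canon A O) (alpha A O)) /\
  (forall O O', wf_poset O -> wf_poset O' ->
     (exists s, iso O O' s) -> canon A O = canon A O') /\
  (* new/old correspond to the added event / inclusion of O *)
  (forall O K a e, wf_poset O -> canon A O = O -> K `<=` O.1 ->
     e \notin evX O ->
     iso (delta O K e a) (canon A (delta O K e a))
         (fun x => if x == e then newf A O K a else oldf A O K a x)).

Definition stepAC (N : net) (A : abs_setting) (p : pmark)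
    (lb : {fset lev} * Act) (q : pmark) : Prop :=
  exists (O : poset) (c : cmark) (K : {fset lev}) (e : E) (a : Act) (c' : cmark),
    stepC N (O, c) (K, (e, a)) (delta O K e a, c') /\
    p = (canon A O, crename (alpha A O) c) /\
    lb = (srename (alpha A O) K, a) /\
    exists e', e' \notin evX (canon A O) /\
      q = (canon A (delta (canon A O) (srename (alpha A O) K) e' a),
           crename (fun x => if x == e
                             then newf A (canon A O) (srename (alpha A O) K) a
                             else oldf A (canon A O) (srename (alpha A O) K) a
                                       (alpha A O x)) c').

Definition abisim (N : net) (A : abs_setting)
    (R : poset -> pmark -> pmark -> Prop) : Prop :=
  forall O p q, R O p q ->
    canon A O = O /\
    is_pmark p /\ is_pmark q /\ p.1 = O /\ q.1 = O /\
    (forall lb p', stepAC N A p lb p' ->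
       exists q', stepAC N A q lb q' /\ q'.1 = p'.1 /\ R p'.1 p' q') /\
    (forall lb q', stepAC N A q lb q' ->
       exists p', stepAC N A p lb p' /\ p'.1 = q'.1 /\ R q'.1 p' q').

Definition simAC (N : net) (A : abs_setting) (O : poset) (p q : pmark) : Prop :=
  exists R, abisim N A R /\ R O p q.

End Causal.

From HB Require Import structures.
From mathcomp Require Import all_boot.
From mathcomp Require Import finmap.

(* Renaming a P-marking along a poset isomorphism, and the event added by a
   step to any fresh name, maps concrete steps to concrete steps, so ~_C is
   invariant under isomorphism.  A CG_AC transition is the image of a CG_C
   transition under alpha_O and new/old.  Hence ~_C pushed forward along these
   isomorphisms is an abstract bisimulation, and ~_AC pulled back along any
   isomorphism of O onto [O] is a concrete one: the fresh event of a concrete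
   step is matched by the new event of the abstract step. *)

Set Implicit Arguments.
Unset Strict Implicit.
Unset Printing Implicit Defensive.

Local Open Scope fset_scope.

Section Renaming.
Variables (E Act S : choiceType).
Implicit Types (O : poset E Act) (u : lev E Act) (K : {fset lev E Act})
  (c : cmark E Act S) (s t : E -> E).

Lemma evXP O x : reflect (exists a, (x, a) \in O.1) (x \in evX O).
Proof.
apply: (iffP idP) => [/imfsetP[[y b] /= H ->]|[a H]]; first by exists b.
by apply/imfsetP; exists (x, a).
Qed.

Lemma mem_evX O u : u \in O.1 -> u.1 \in evX O.
Proof. by case: u => x a H; apply/evXP; exists a. Qed.

Lemma srename_comp s t K : srename s (srename t K) = srename (s \o t) K.
Proof. by rewrite /srename -imfset_comp. Qed.

Lemma eq_in_srename s t K :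
  (forall u, u \in K -> s u.1 = t u.1) -> srename s K = srename t K.
Proof. by move=> H; apply: eq_in_imfset => u uK; rewrite /lrename H. Qed.

Lemma srename_id K : srename id K = K.
Proof. by rewrite /srename -[RHS]imfset_id; apply: eq_imfset => // -[]. Qed.

Lemma srenameU s (K1 K2 : {fset lev E Act}) :
  srename s (K1 `|` K2) = srename s K1 `|` srename s K2.
Proof. by rewrite /srename imfsetU. Qed.

Lemma srename1 s u : srename s [fset u] = [fset lrename s u].
Proof. by rewrite /srename imfset_fset1. Qed.

Lemma crename_comp s t c : crename s (crename t c) = crename (s \o t) c.
Proof.
by rewrite /crename -imfset_comp; apply: eq_imfset => //= p /=; rewrite srename_comp.
Qed.

Lemma eq_in_crename s t c :
  (forall p u, p \in c -> u \in p.1 -> s u.1 = t u.1) -> crename s c = crename t c.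
Proof.
by move=> H; apply: eq_in_imfset => p pc; rewrite (@eq_in_srename s t) // => u; apply: H.
Qed.

Lemma crename_id c : crename id c = c.
Proof.
rewrite /crename -[RHS]imfset_id; apply: eq_imfset => // -[K x] /=.
by rewrite srename_id.
Qed.

Lemma crenameU s c1 c2 : crename s (c1 `|` c2) = crename s c1 `|` crename s c2.
Proof. by rewrite /crename imfsetU. Qed.

Lemma places_crename s c : places (crename s c) = places c.
Proof. by rewrite /places /crename -imfset_comp; apply: eq_imfset. Qed.

Lemma causesP c u : reflect (exists2 p, p \in c & u \in p.1) (u \in causes c).
Proof.
apply: (iffP idP) => [/bigfcupP[p /andP[pc _] H]|[p pc H]]; first by exists p.
by apply/bigfcupP; exists p; rewrite ?pc.
Qed.

Lemma causes_crename s c : causes (crename s c) = srename s (causes c).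
Proof.
apply/fsetP => u; apply/causesP/imfsetP => [[p /imfsetP[q /= qc ->] /imfsetP[v /= vq ->]]|].
  by exists v => //; apply/causesP; exists q.
move=> [v /= /causesP[q qc vq] ->]; exists (srename s q.1, q.2).
  by apply/imfsetP; exists q.
by apply/imfsetP; exists v.
Qed.

Lemma crename_mk s K (m : {fset S}) : crename s (mk K m) = mk (srename s K) m.
Proof. by rewrite /crename /mk -imfset_comp; apply: eq_imfset. Qed.

Lemma pmark_lev O c p u : is_pmark (O, c) -> p \in c -> u \in p.1 -> u \in O.1.
Proof. by move=> [_ H] pc; have [/fsubsetP sub _] := H p pc; apply: sub. Qed.

Lemma causes_pmark O c : is_pmark (O, c) -> causes c `<=` O.1.
Proof. by move=> Hc; apply/fsubsetP => u /causesP[p pc up]; apply: pmark_lev Hc pc up. Qed.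

Lemma eq_crename_pmark O c s t :
  is_pmark (O, c) -> (forall x, x \in evX O -> s x = t x) -> crename s c = crename t c.
Proof.
by move=> Hc H; apply: eq_in_crename => p u pc up; rewrite H // mem_evX // (pmark_lev Hc pc).
Qed.

Lemma eq_srename_sub O K s t :
  K `<=` O.1 -> (forall x, x \in evX O -> s x = t x) -> srename s K = srename t K.
Proof. by move=> sK H; apply: eq_in_srename => u uK; rewrite H // mem_evX // (fsubsetP sK). Qed.

End Renaming.

Section Isomorphisms.
Variables (E Act S : choiceType).
Implicit Types (O : poset E Act) (u : lev E Act) (K : {fset lev E Act})
  (c : cmark E Act S) (s t : E -> E).

Lemma morph_evX O O' s x : morphism O O' s -> x \in evX O -> s x \in evX O'.
Proof. by move=> [H _] /evXP[a Ha]; apply/evXP; exists a; apply: (H (x, a)). Qed.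

Lemma morph_srename O O' s K : morphism O O' s -> K `<=` O.1 -> srename s K `<=` O'.1.
Proof.
by move=> [H _] sK; apply/fsubsetP => _ /imfsetP[v /= vK ->]; apply/H/(fsubsetP sK).
Qed.

Lemma iso_sym O O' s : iso O O' s -> exists t, iso O' O t /\
  (forall x, x \in evX O -> t (s x) = x) /\ (forall y, y \in evX O' -> s (t y) = y).
Proof. by move=> [Hs [t [Ht [H1 H2]]]]; exists t; do 2 split => //; exists s. Qed.

Lemma iso_id O : iso O O id.
Proof.
have idO : morphism O O id by split => [[x a]|[x a] [y b]].
by split => //; exists id.
Qed.

Lemma lrenameK O s t u : (forall x, x \in evX O -> t (s x) = x) -> u \in O.1 ->
  lrename t (lrename s u) = u.
Proof. by move=> H uO; move: (mem_evX uO); case: u uO => x a _ xO; rewrite /lrename /= H. Qed.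

Lemma eq_in_morph O O' s s' : wf_poset O -> morphism O O' s ->
  (forall x, x \in evX O -> s x = s' x) -> morphism O O' s'.
Proof.
move=> [_ [Hsub _]] [H1 H2] He; split.
  by move=> u uO; rewrite /lrename -He ?mem_evX //; apply: H1.
move=> u v uv; have [uO vO] := Hsub _ _ uv.
by rewrite /lrename -!He ?mem_evX //; apply: H2.
Qed.

Lemma eq_in_iso O O' s s' : wf_poset O -> iso O O' s ->
  (forall x, x \in evX O -> s x = s' x) -> iso O O' s'.
Proof.
move=> wO [Hs [t [Ht [H1 H2]]]] He; split; first exact: eq_in_morph Hs He.
exists t; split => //; split => x xO; first by rewrite -He ?H1.
by rewrite -He ?H2 //; apply: morph_evX Ht xO.
Qed.

Lemma morph_comp O1 O2 O3 s s' :
  morphism O1 O2 s -> morphism O2 O3 s' -> morphism O1 O3 (s' \o s).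
Proof.
move=> [a1 a2] [b1 b2]; split => [u uO|u v uv]; first exact: (b1 _ (a1 _ uO)).
exact: (b2 (lrename s u) (lrename s v) (a2 _ _ uv)).
Qed.

Lemma iso_comp O1 O2 O3 s s' : iso O1 O2 s -> iso O2 O3 s' -> iso O1 O3 (s' \o s).
Proof.
move=> [Hs [t [Ht [H1 H2]]]] [Hs' [t' [Ht' [H1' H2']]]].
split; first exact: morph_comp Hs Hs'.
exists (t \o t'); split; first exact: morph_comp Ht' Ht.
split => x xO /=; first by rewrite H1' ?H1 //; apply: morph_evX Hs xO.
by rewrite H2 ?H2' //; apply: morph_evX Ht' xO.
Qed.

Lemma pmark_iso O O' s c : wf_poset O' -> iso O O' s -> is_pmark (O, c) ->
  is_pmark (O', crename s c).
Proof.
move=> wO' [Hs [t [Ht [H1 H2]]]] Hc; split => // _ /imfsetP[p /= pc ->] /=.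
have [Hsub Hdown] := Hc.2 p pc.
split; first exact: morph_srename Hs Hsub.
move=> u _ /imfsetP[v /= vp ->] uv.
have uO' : u \in O'.1 by have [_ [HO' _]] := wO'; exact: (HO' _ _ uv).1.
have := Ht.2 _ _ uv; rewrite (lrenameK H1) ?(fsubsetP Hsub) // => /(Hdown _ _ vp) tu.
by apply/imfsetP; exists (lrename t u); rewrite //= (lrenameK H2).
Qed.

Lemma maxsE O K u :
  (u \in maxs O K) = (u \in K) && ~~ has (fun v => (v != u) && ((u, v) \in O.2)) K.
Proof. by rewrite /maxs !inE. Qed.

Lemma maxs_sub O K : maxs O K `<=` K.
Proof. by apply/fsubsetP => u; rewrite maxsE => /andP[]. Qed.

Lemma maxs_iso O O' s K : iso O O' s -> K `<=` O.1 ->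
  srename s (maxs O K) = maxs O' (srename s K).
Proof.
move=> Hs sK; have [t [Ht [H1 H2]]] := iso_sym Hs.
have Kinj u v : u \in K -> v \in K -> lrename s u = lrename s v -> u = v.
  by move=> uK vK e; rewrite -(lrenameK H1 (fsubsetP sK _ uK)) e (lrenameK H1) ?(fsubsetP sK).
apply/fsetP => w; apply/imfsetP/idP => [[u /= + ->]|].
  rewrite !maxsE => /andP[uK nh]; rewrite (in_imfset _ _ uK) /=.
  apply: contra nh => /hasP[_ /imfsetP[v /= vK ->] /andP[ne uv]].
  apply/hasP; exists v => //; apply/andP; split; first by apply: contraNneq ne => ->.
  by have := Ht.1.2 _ _ uv; rewrite !(lrenameK H1) ?(fsubsetP sK).
rewrite maxsE => /andP[/imfsetP[u /= uK ->] nh]; exists u => //.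
rewrite maxsE uK /=; apply: contra nh => /hasP[v vK /andP[ne uv]].
apply/hasP; exists (lrename s v); first exact: in_imfset.
by rewrite Hs.1.2 // andbT; apply: contraNneq ne => /Kinj ->.
Qed.

End Isomorphisms.

Definition extend (E : choiceType) (s : E -> E) (e e' : E) : E -> E :=
  fun x => if x == e then e' else s x.

Section Delta.
Variables (E Act : choiceType).
Implicit Types (O : poset E Act) (u : lev E Act) (K : {fset lev E Act}) (s t : E -> E).

Lemma delta1E O K e a u : (u \in (delta O K e a).1) = (u == (e, a)) || (u \in O.1).
Proof. by rewrite /delta /= in_fsetU in_fset1. Qed.

Lemma delta2P O K e a u v : (u, v) \in (delta O K e a).2 <->
  [\/ (u, v) \in O.2,
      v = (e, a) /\ u \in O.1 /\ (exists2 k, k \in K & (u, k) \in O.2) |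
      u = (e, a) /\ v = (e, a)].
Proof.
rewrite /delta /= !in_fsetU in_fset1; split.
  case/orP => [/orP[H|/imfsetP[w /=]]|/eqP[-> ->]]; [by constructor 1| |by constructor 3].
  rewrite !inE => /andP[wO /hasP[k kK wk]] [-> ->].
  by constructor 2; do 2 split => //; exists k.
case=> [->//|[-> [uO [k kK uk]]]|[-> ->]]; last by rewrite eqxx !orbT.
apply/orP; left; apply/orP; right; apply/imfsetP; exists u => //=.
by rewrite !inE uO /=; apply/hasP; exists k.
Qed.

Lemma evX_delta O K e a x : (x \in evX (delta O K e a)) = (x == e) || (x \in evX O).
Proof.
apply/evXP/orP => [[b]|[/eqP->|/evXP[b xb]]].
- by rewrite delta1E => /orP[/eqP[-> _]|/mem_evX]; [left|right].
- by exists a; rewrite delta1E eqxx.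
- by exists b; rewrite delta1E xb orbT.
Qed.

Lemma notin_evX_lev O e a : e \notin evX O -> (e, a) \notin O.1.
Proof. by apply: contra => /mem_evX. Qed.

Lemma neq_notin_evX O e x : e \notin evX O -> x \in evX O -> x != e.
Proof. by move=> eO; apply: contraTneq => ->. Qed.

Lemma wf_delta O K e a : wf_poset O -> e \notin evX O -> wf_poset (delta O K e a).
Proof.
move=> [Hlab [Hsub [Hrefl [Hanti Htrans]]]] eO.
have nea := notin_evX_lev a eO.
have nO2l w : (e, a, w) \notin O.2 by apply: contra nea => /Hsub[].
have nO2r w : (w, (e, a)) \notin O.2 by apply: contra nea => /Hsub[].
split.
  move=> x b1 b2; rewrite !delta1E => /orP[/eqP[ex ->]|H1] /orP[/eqP[ex2 ->]|H2] //.
  - by move/mem_evX: H2; rewrite /= ex (negbTE eO).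
  - by move/mem_evX: H1; rewrite /= ex2 (negbTE eO).
  - exact: Hlab H1 H2.
split.
  move=> u v /delta2P[H|[-> [uO _]]|[-> ->]]; rewrite !delta1E ?eqxx ?uO ?orbT //.
  by have [-> ->] := Hsub _ _ H; rewrite !orbT.
split.
  move=> u; rewrite delta1E => /orP[/eqP ->|uO]; apply/delta2P; first by constructor 3.
  by constructor 1; apply: Hrefl.
split.
  move=> u v /delta2P[H|[-> [uO _]]|[-> ->]] /delta2P //.
  - case=> [|[eu _]|[ev _]]; first exact: Hanti.
    + by move: H; rewrite eu (negbTE (nO2l _)).
    + by move: H; rewrite ev (negbTE (nO2r _)).
  - by case=> [|[_ [eaO _]]|[_ ->]] //; rewrite (negbTE (nO2l _)).
move=> u v w /delta2P[H|[-> [uO [k kK uk]]]|[-> ->]] //.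
- case/delta2P => [H'|[-> [vO [k kK vk]]]|[ev ->]].
  + by apply/delta2P; constructor 1; apply: Htrans H H'.
  + apply/delta2P; constructor 2; split => //; split; first by have [] := Hsub _ _ H.
    by exists k; last exact: Htrans H vk.
  + by move: H; rewrite ev (negbTE (nO2r _)).
- case/delta2P => [H'|[_ [eaO _]]|[_ ->]]; first by rewrite (negbTE (nO2l _)) in H'.
    by rewrite eaO in nea.
  by apply/delta2P; constructor 2; split => //; split => //; exists k.
Qed.

Lemma down_closed_delta O K e a k : wf_poset O -> e \notin evX O -> down_closed O k ->
  down_closed (delta O K e a) k.
Proof.
move=> _ eO [ksub kdc]; have nea := notin_evX_lev a eO.
split; first by apply/fsubsetP => u uk; rewrite delta1E (fsubsetP ksub) ?orbT.
move=> u v vk /delta2P[H|[ev _]|[_ ev]]; first exact: kdc vk H.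
- by move: nea; rewrite -ev (fsubsetP ksub).
- by move: nea; rewrite -ev (fsubsetP ksub).
Qed.

Lemma extend_new s e e' : extend s e e' e = e'.
Proof. by rewrite /extend eqxx. Qed.

Lemma extend_old s e e' x : x != e -> extend s e e' x = s x.
Proof. by rewrite /extend => /negbTE ->. Qed.

Lemma lrename_extend O s e e' u : e \notin evX O -> u \in O.1 ->
  lrename (extend s e e') u = lrename s u.
Proof. by move=> eO uO; rewrite /lrename extend_old // (neq_notin_evX eO (mem_evX uO)). Qed.

Lemma delta_morph O O' s K e e' a : wf_poset O -> morphism O O' s ->
  e \notin evX O -> morphism (delta O K e a) (delta O' (srename s K) e' a) (extend s e e').
Proof.
move=> [_ [Hsub _]] [m1 m2] eO; split.
  move=> u; rewrite [u \in _]delta1E => /orP[/eqP->|uO].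
    by rewrite delta1E /lrename /= extend_new eqxx.
  by rewrite (lrename_extend _ _ eO uO) delta1E m1 ?orbT.
move=> u v /delta2P[H|[-> [uO [k kK uk]]]|[-> ->]].
- have [uO vO] := Hsub _ _ H.
  by rewrite !(lrename_extend _ _ eO) //; apply/delta2P; constructor 1; apply: m2.
- rewrite (lrename_extend _ _ eO uO) {2}/lrename /= extend_new.
  apply/delta2P; constructor 2; split => //; split; first exact: m1.
  by exists (lrename s k); [exact: in_imfset | exact: m2].
- by rewrite /lrename /= extend_new; apply/delta2P; constructor 3.
Qed.

Lemma extendK O K e e' a s t x : (forall y, y \in evX O -> t (s y) = y) ->
  (forall y, y \in evX O -> s y != e') -> e \notin evX O ->
  x \in evX (delta O K e a) -> extend t e' e (extend s e e' x) = x.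
Proof.
move=> H1 Hne eO; rewrite evX_delta => /orP[/eqP->|xO]; first by rewrite !extend_new.
by rewrite (extend_old _ _ (neq_notin_evX eO xO)) extend_old ?H1 ?Hne.
Qed.

Lemma delta_iso O O' s K e e' a : wf_poset O -> wf_poset O' -> iso O O' s ->
  e \notin evX O -> e' \notin evX O' -> K `<=` O.1 ->
  iso (delta O K e a) (delta O' (srename s K) e' a) (extend s e e').
Proof.
move=> wO wO' Hs eO e'O sK; have [t [Ht [H1 H2]]] := iso_sym Hs.
have neq_e' y : y \in evX O -> s y != e' by move/(morph_evX Hs.1); apply: neq_notin_evX.
have neq_e y : y \in evX O' -> t y != e by move/(morph_evX Ht.1); apply: neq_notin_evX.
split; first exact: delta_morph wO Hs.1 eO.
exists (extend t e' e); split; last by split => x; apply: extendK.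
suff {2}-> : K = srename t (srename s K) by apply: delta_morph wO' Ht.1 e'O.
by rewrite srename_comp (@eq_srename_sub _ _ O K _ id) ?srename_id.
Qed.

End Delta.

Section ConcreteSteps.
Variables (E Act S T : choiceType) (N : net Act S T).
Implicit Types (O : poset E Act) (K k : {fset lev E Act}) (c : cmark E Act S)
  (p q : pmark E Act S) (s t : E -> E).

Lemma pmarkUl O c c' : is_pmark (O, c `|` c') -> is_pmark (O, c).
Proof. by move=> [wO H]; split => // k kc; apply: H; rewrite in_fsetU kc. Qed.

Lemma down_closed_causes O c : is_pmark (O, c) -> down_closed O (causes c).
Proof.
move=> Hc; split; first exact: causes_pmark.
by move=> u v /causesP[k kc vk] uv; apply/causesP; exists k => //; apply: (Hc.2 k kc).2 vk uv.
Qed.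

Lemma down_closed_delta_new O K e a k : wf_poset O -> e \notin evX O ->
  down_closed O k -> K `<=` k -> down_closed (delta O K e a) (k `|` [fset (e, a)]).
Proof.
move=> [_ [Hsub _]] eO [ksub kdc] Kk; have nea := notin_evX_lev a eO.
split.
  apply/fsubsetP => u; rewrite in_fsetU in_fset1 delta1E.
  by case/orP => [uk|->] //; rewrite (fsubsetP ksub u uk) orbT.
move=> u v /fsetUP[vk|/fset1P->] /delta2P.
- case=> [uv|[ev _]|[_ ev]]; first by rewrite in_fsetU (kdc _ _ vk uv).
  + by move: nea; rewrite -ev (fsubsetP ksub).
  + by move: nea; rewrite -ev (fsubsetP ksub).
- case=> [uv|[_ [uO [k0 k0K uk0]]]|[-> _]]; rewrite in_fsetU ?in_fset1 ?eqxx ?orbT //.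
  + by move: nea; rewrite (Hsub _ _ uv).2.
  + by rewrite (kdc _ _ (fsubsetP Kk _ k0K) uk0).
Qed.

Lemma stepC_inv p K e a q : stepC N p (K, (e, a)) q ->
  [/\ is_pmark p, e \notin evX p.1, K `<=` p.1.1 & q.1 = delta p.1 K e a].
Proof.
move=> [t [c [c' [Hp [Hc [_ [_ [/= eO [/= HK ->]]]]]]]]]; split => //.
have Hcc : is_pmark (p.1, c) by apply: (pmarkUl (c' := c')); rewrite -Hc; case: (p) Hp.
by rewrite HK; apply: fsubset_trans (maxs_sub _ _) (causes_pmark Hcc).
Qed.

Lemma stepC_pmark p lb q : stepC N p lb q -> is_pmark q.
Proof.
case: lb => K [e a] [t [c [c' [Hp [Hc [_ [_ [/= eO [/= HK ->]]]]]]]]].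
have [wO Hdc] := Hp.
have Hcc : is_pmark (p.1, c) by apply: (pmarkUl (c' := c')); rewrite -Hc; case: (p) Hp.
split; first exact: wf_delta.
move=> k /=; rewrite in_fsetU => /orP[/imfsetP[x /= _ ->]|kc'] /=.
  apply: down_closed_delta_new => //; first exact: down_closed_causes.
  by rewrite HK maxs_sub.
by apply: down_closed_delta => //; apply: Hdc; rewrite Hc in_fsetU kc' orbT.
Qed.

Lemma stepC_iso O O' s c K e e' a q : wf_poset O' -> iso O O' s ->
  stepC N (O, c) (K, (e, a)) q -> e' \notin evX O' ->
  stepC N (O', crename s c) (srename s K, (e', a))
    (delta O' (srename s K) e' a, crename (extend s e e') q.2).
Proof.
move=> wO' Hs st e'O; have [Hp /= eO _ _] := stepC_inv st.
move: st => [t [c0 [c' [_ [/= Hc [Hpl [/= Hl [_ [/= HK ->]]]]]]]]].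
have Hc0 : is_pmark (O, c0) by apply: (pmarkUl (c' := c')); rewrite -Hc.
have Hc' : is_pmark (O, c') by apply: (pmarkUl (c' := c0)); rewrite fsetUC -Hc.
have ext_s x : x \in evX O -> extend s e e' x = s x.
  by move=> xO; apply/extend_old/(neq_notin_evX eO).
exists t, (crename s c0), (crename s c'); split; first exact: pmark_iso wO' Hs Hp.
split; first by rewrite /= Hc crenameU.
split; first by rewrite places_crename.
split => //; split => //; split.
  by rewrite /= causes_crename HK (maxs_iso Hs) // causes_pmark.
congr (_, _); rewrite /= crenameU crename_mk srenameU srename1 causes_crename.
rewrite (eq_srename_sub (causes_pmark Hc0) ext_s) (eq_crename_pmark Hc' ext_s).
by rewrite /lrename /= extend_new.
Qed.

End ConcreteSteps.

Section ConcreteBisimilarity.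
Variables (E Act S T : choiceType) (N : net Act S T).
Hypothesis E_infinite : forall X : {fset E}, exists e : E, e \notin X.
Implicit Types (O X : poset E Act) (c : cmark E Act S) (p q : pmark E Act S) (s t : E -> E).

Lemma simC_pmark O p q : simC N O p q -> [/\ is_pmark p, is_pmark q, p.1 = O & q.1 = O].
Proof. by move=> [R [HR /HR[Hp [Hq [p1 [q1 _]]]]]]. Qed.

Lemma simC_step O p q lb p' : simC N O p q -> stepC N p lb p' ->
  exists q', stepC N q lb q' /\ q'.1 = p'.1 /\ simC N p'.1 p' q'.
Proof.
move=> [R [HR /HR[_ [_ [_ [_ [fwd _]]]]]]] /fwd[q' [st [e Hq']]].
by exists q'; split => //; split => //; exists R.
Qed.

Lemma simC_sym O p q : simC N O p q -> simC N O q p.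
Proof.
move=> [R [HR H]]; exists (fun O p q => R O q p); split => // {H} O' p' q'.
move=> /HR[Hp [Hq [p1 [q1 [fwd bwd]]]]].
refine (conj Hq (conj Hp (conj q1 (conj p1 (conj _ _))))) => lb r.
  by move=> /bwd[r' [st [e H]]]; exists r'.
by move=> /fwd[r' [st [e H]]]; exists r'.
Qed.

Lemma cbisim_sym (R : poset E Act -> pmark E Act S -> pmark E Act S -> Prop) :
  (forall O p q, R O p q -> R O q p) ->
  (forall O p q, R O p q -> is_pmark p /\ p.1 = O) ->
  (forall O p q lb p', R O p q -> stepC N p lb p' ->
     exists q', stepC N q lb q' /\ q'.1 = p'.1 /\ R p'.1 p' q') ->
  cbisim N R.
Proof.
move=> Rsym Rinv fwd O p q HR.
have [Hp p1] := Rinv _ _ _ HR; have [Hq q1] := Rinv _ _ _ (Rsym _ _ _ HR).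
refine (conj Hp (conj Hq (conj p1 (conj q1 (conj (fun lb => fwd _ _ _ lb ^~ HR) _))))).
move=> lb q' /(fwd _ _ _ _ _ (Rsym _ _ _ HR))[p' [st [e Hp']]].
by exists p'; do 2 split => //; apply: Rsym.
Qed.

Definition simC_image X p q := exists O c1 c2 s,
  [/\ wf_poset X, iso O X s, simC N O (O, c1) (O, c2),
      p = (X, crename s c1) & q = (X, crename s c2)].

(* A step of the image is pulled back along the inverse isomorphism, matched
   there, and the match is pushed forward again; the added events are renamed
   to fresh ones on each side. *)
Lemma simC_image_step X p q lb p' : simC_image X p q -> stepC N p lb p' ->
  exists q', stepC N q lb q' /\ q'.1 = p'.1 /\ simC_image p'.1 p' q'.
Proof.
move=> [O [c1 [c2 [s [wX Hs Hsim -> ->]]]]].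
case: lb => K [e a]; case: p' => X' c' st.
have [_ /= eX sK /= X'E] := stepC_inv st.
have [Hc1 _ _ _] := simC_pmark Hsim.
have [t [Ht [H1 H2]]] := iso_sym Hs.
have [e2 e2O] := E_infinite (evX O).
have st1 := stepC_iso Hc1.1 Ht st e2O.
rewrite crename_comp (eq_crename_pmark (t := id) Hc1) ?crename_id in st1; last first.
  by move=> x xO; rewrite /= H1.
have [[Q0 c0] [stq0 [/= Q0E Hsim0]]] := simC_step Hsim st1.
have stq := stepC_iso wX Hs stq0 eX.
have sK' : srename s (srename t K) = K.
  by rewrite srename_comp (eq_srename_sub (t := id) sK) ?srename_id // => x xX; rewrite /= H2.
rewrite sK' in stq.
have neq_e2 y : y \in evX X -> t y != e2 by move/(morph_evX Ht.1); apply: neq_notin_evX.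
eexists; split; first exact: stq.
split; first by rewrite /= X'E.
exists (delta O (srename t K) e2 a), (crename (extend t e e2) c'), c0, (extend s e2 e).
split => //=.
- exact: (stepC_pmark st).1.
- rewrite X'E -[in X in iso _ X]sK'.
  exact: delta_iso Hc1.1 wX Hs e2O eX (morph_srename Ht.1 sK).
- by rewrite Q0E in Hsim0.
- rewrite crename_comp (eq_crename_pmark (t := id) (stepC_pmark st)) ?crename_id //.
  by move=> x; rewrite X'E; apply: extendK.
- by rewrite X'E.
Qed.

Lemma simC_iso O O' s c1 c2 : wf_poset O' -> iso O O' s ->
  simC N O (O, c1) (O, c2) -> simC N O' (O', crename s c1) (O', crename s c2).
Proof.
move=> wO' Hs Hsim; exists simC_image; split; last by exists O, c1, c2, s.
apply: cbisim_sym.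
- move=> X p q [O0 [d1 [d2 [s0 [wX Hs0 H -> ->]]]]].
  by exists O0, d2, d1, s0; split => //; apply: simC_sym.
- move=> X p q [O0 [d1 [d2 [s0 [wX Hs0 H -> _]]]]].
  by have [Hd1 _ _ _] := simC_pmark H; split => //; apply: pmark_iso Hs0 Hd1.
- exact: simC_image_step.
Qed.

End ConcreteBisimilarity.

Section AbstractSetting.
Variables (E Act S T : choiceType) (N : net Act S T) (A : abs_setting E Act).
Hypothesis E_infinite : forall X : {fset E}, exists e : E, e \notin X.
Hypothesis HA : wf_setting A.
Implicit Types (O P : poset E Act) (K L : {fset lev E Act}) (c : cmark E Act S)
  (p q : pmark E Act S) (s t : E -> E).

Lemma canon_wf O : wf_poset O -> wf_poset (canon A O).
Proof. by have [H _] := HA; apply: H. Qed.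

Lemma alpha_iso O : wf_poset O -> iso O (canon A O) (alpha A O).
Proof. by have [_ [H _]] := HA; apply: H. Qed.

Lemma canon_iso O O' s : wf_poset O -> wf_poset O' -> iso O O' s -> canon A O = canon A O'.
Proof. by have [_ [_ [H _]]] := HA => wO wO' Hs; apply: H => //; exists s. Qed.

Lemma canon_idem O : wf_poset O -> canon A (canon A O) = canon A O.
Proof.
move=> wO; have [t [Ht _]] := iso_sym (alpha_iso wO).
by apply: canon_iso Ht; [exact: canon_wf | exact: wO].
Qed.

Lemma delta_canon_iso P K e a : wf_poset P -> canon A P = P -> K `<=` P.1 ->
  e \notin evX P -> iso (delta P K e a) (canon A (delta P K e a))
    (fun x => if x == e then newf A P K a else oldf A P K a x).
Proof. by have [_ [_ [_ H]]] := HA; apply: H. Qed.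

(* The renaming c' |-> c'_{O,K,e_a} of CG_AC, for a source poset identified with
   the abstract poset P through s (alpha_O in the paper). *)
Definition abs_ren P L a s e : E -> E :=
  fun x => if x == e then newf A P L a else oldf A P L a (s x).

Lemma abs_ren_extend O P L a f g s e e' x :
  (forall y, y \in evX O -> f (g y) = s y) -> (forall y, y \in evX O -> g y != e') ->
  e \notin evX O -> (x == e) || (x \in evX O) ->
  abs_ren P L a f e' (extend g e e' x) = abs_ren P L a s e x.
Proof.
move=> fg gne eO /orP[/eqP->|xO]; first by rewrite /abs_ren extend_new !eqxx.
rewrite /abs_ren (extend_old _ _ (neq_notin_evX eO xO)) (negbTE (neq_notin_evX eO xO)).
by rewrite (negbTE (gne _ xO)) fg.
Qed.

Lemma abs_ren_iso O P s K e a : wf_poset O -> wf_poset P -> canon A P = P ->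
  iso O P s -> e \notin evX O -> K `<=` O.1 ->
  iso (delta O K e a) (canon A (delta O K e a)) (abs_ren P (srename s K) a s e).
Proof.
move=> wO wP cP Hs eO sK; have [e' e'P] := E_infinite (evX P).
have wD := wf_delta K a wO eO; have wD' := wf_delta (srename s K) a wP e'P.
have Hd := delta_iso a wO wP Hs eO e'P sK.
rewrite (canon_iso wD wD' Hd).
apply: eq_in_iso wD (iso_comp Hd (delta_canon_iso a wP cP (morph_srename Hs.1 sK) e'P)) _.
move=> x; rewrite evX_delta; apply: (@abs_ren_extend O P _ a id) => // y.
by move/(morph_evX Hs.1); apply: neq_notin_evX.
Qed.

Lemma crename_abs_ren_extend O K P L a f g s e e' c :
  is_pmark (delta O K e a, c) ->
  (forall y, y \in evX O -> f (g y) = s y) -> (forall y, y \in evX O -> g y != e') ->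
  e \notin evX O ->
  crename (abs_ren P L a f e') (crename (extend g e e') c) = crename (abs_ren P L a s e) c.
Proof.
move=> Hc fg gne eO; rewrite crename_comp; apply: eq_crename_pmark Hc _ => x.
by rewrite evX_delta; apply: abs_ren_extend.
Qed.

Lemma stepAC_of_stepC O P phi c K e a p' : wf_poset P -> canon A P = P -> iso O P phi ->
  stepC N (O, c) (K, (e, a)) p' ->
  stepAC N A (P, crename phi c) (srename phi K, a)
    (canon A p'.1, crename (abs_ren P (srename phi K) a phi e) p'.2).
Proof.
move=> wP cP Hphi st; have [Hp /= eO sK p'1] := stepC_inv st.
have Hp' : is_pmark (delta O K e a, p'.2).
  by rewrite -p'1 -surjective_pairing; apply: stepC_pmark st.
have [g [Hg [_ Hg2]]] := iso_sym (alpha_iso wP); rewrite cP in Hg Hg2.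
have Hpsi := iso_comp Hphi Hg.
have alpha_psi x : x \in evX O -> alpha A P ((g \o phi) x) = phi x.
  by move=> xO; rewrite /= Hg2 // (morph_evX Hphi.1).
have [e2 e2P] := E_infinite (evX P).
have LE : srename (alpha A P) (srename (g \o phi) K) = srename phi K.
  by rewrite srename_comp; apply: eq_srename_sub sK _.
exists P, (crename (g \o phi) c), (srename (g \o phi) K), e2, a,
  (crename (extend (g \o phi) e e2) p'.2).
split; first exact: stepC_iso wP Hpsi st e2P.
split; first by rewrite cP crename_comp (eq_crename_pmark Hp alpha_psi).
split; first by rewrite LE.
exists e2; split; first by rewrite cP.
rewrite cP LE p'1; congr (_, _).
  exact: canon_iso (wf_delta _ _ Hp.1 eO) (wf_delta _ _ wP e2P)
    (delta_iso a Hp.1 wP Hphi eO e2P sK).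
symmetry; apply: crename_abs_ren_extend Hp' alpha_psi _ eO.
by move=> y /(morph_evX Hpsi.1); apply: neq_notin_evX.
Qed.

Lemma stepC_of_stepAC O P phi c K e a q : wf_poset O -> wf_poset P -> iso O P phi ->
  is_pmark (O, c) -> K `<=` O.1 -> e \notin evX O ->
  stepAC N A (P, crename phi c) (srename phi K, a) q ->
  exists c', stepC N (O, c) (K, (e, a)) (delta O K e a, c') /\
    q = (canon A (delta O K e a), crename (abs_ren P (srename phi K) a phi e) c').
Proof.
move=> wO wP Hphi Hc sK eO.
move=> [O2 [c2 [K2 [e2 [b [c2' [st [[PE cE] [[LE ->] [e3 [e3P ->]]]]]]]]]]].
have [Hp2 /= e2O _ _] := stepC_inv st.
have [phii [Hphii [Hphii1 Hphii2]]] := iso_sym Hphi.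
have Halpha : iso O2 P (alpha A O2) by rewrite PE; apply: alpha_iso Hp2.1.
have Hchi := iso_comp Halpha Hphii.
have phi_chi y : y \in evX O2 -> phi ((phii \o alpha A O2) y) = alpha A O2 y.
  by move=> yO2; rewrite /= Hphii2 // (morph_evX Halpha.1).
have stO := stepC_iso wO Hchi st eO.
rewrite -crename_comp -cE -srename_comp -LE crename_comp srename_comp in stO.
rewrite (eq_crename_pmark (t := id) Hc) ?crename_id in stO; last by move=> x xO; rewrite /= Hphii1.
rewrite (eq_srename_sub (t := id) sK) ?srename_id in stO; last by move=> x xO; rewrite /= Hphii1.
exists (crename (extend (phii \o alpha A O2) e2 e) c2'); split; first exact: stO.
rewrite -PE -LE; congr (_, _).
  rewrite -PE in e3P; symmetry.
  exact: canon_iso (wf_delta K b wO eO) (wf_delta (srename phi K) b wP e3P)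
    (delta_iso b wO wP Hphi eO e3P sK).
symmetry; apply: crename_abs_ren_extend (stepC_pmark st) phi_chi _ e2O.
by move=> y /(morph_evX Hchi.1); apply: neq_notin_evX.
Qed.

Lemma stepAC_label_sub p L a q : stepAC N A p (L, a) q -> L `<=` p.1.1.
Proof.
move=> [O [c [K [e [b [c' [st [-> [[-> _] _]]]]]]]]].
by have [Hp _ sK _] := stepC_inv st; apply: morph_srename (alpha_iso Hp.1).1 sK.
Qed.

Lemma simAC_step O p q lb p' : simAC N A O p q -> stepAC N A p lb p' ->
  exists q', stepAC N A q lb q' /\ q'.1 = p'.1 /\ simAC N A p'.1 p' q'.
Proof.
move=> [R [HR /HR[_ [_ [_ [_ [_ [fwd _]]]]]]]] /fwd[q' [st [e Hq']]].
by exists q'; split => //; split => //; exists R.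
Qed.

Lemma simAC_sym O p q : simAC N A O p q -> simAC N A O q p.
Proof.
move=> [R [HR H]]; exists (fun O p q => R O q p); split => // {H} O' p' q'.
move=> /HR[cO [Hp [Hq [p1 [q1 [fwd bwd]]]]]].
refine (conj cO (conj Hq (conj Hp (conj q1 (conj p1 (conj _ _)))))) => lb r.
  by move=> /bwd[r' [st [e H]]]; exists r'.
by move=> /fwd[r' [st [e H]]]; exists r'.
Qed.

Lemma abisim_sym (R : poset E Act -> pmark E Act S -> pmark E Act S -> Prop) :
  (forall O p q, R O p q -> R O q p) ->
  (forall O p q, R O p q -> [/\ canon A O = O, is_pmark p & p.1 = O]) ->
  (forall O p q lb p', R O p q -> stepAC N A p lb p' ->
     exists q', stepAC N A q lb q' /\ q'.1 = p'.1 /\ R p'.1 p' q') ->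
  abisim N A R.
Proof.
move=> Rsym Rinv fwd O p q HR.
have [cO Hp p1] := Rinv _ _ _ HR; have [_ Hq q1] := Rinv _ _ _ (Rsym _ _ _ HR).
refine (conj cO (conj Hp (conj Hq (conj p1 (conj q1 (conj (fun lb => fwd _ _ _ lb ^~ HR) _)))))).
move=> lb q' /(fwd _ _ _ _ _ (Rsym _ _ _ HR))[p' [st [e Hp']]].
by exists p'; do 2 split => //; apply: Rsym.
Qed.

Definition canon_simC P p q := canon A P = P /\ simC N P p q.

Lemma canon_simC_step P p q lb p' : canon_simC P p q -> stepAC N A p lb p' ->
  exists q', stepAC N A q lb q' /\ q'.1 = p'.1 /\ canon_simC p'.1 p' q'.
Proof.
move=> [cP Hsim]; have [Hp Hq pP qP] := simC_pmark Hsim.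
case: p pP Hp Hsim => _ c1 /= ->; case: q qP Hq => _ c2 /= -> Hq Hp Hsim.
case: lb => L a st; have wP := Hp.1; have sL := stepAC_label_sub st.
have [e eP] := E_infinite (evX P).
have stP : stepAC N A (P, crename id c1) (srename id L, a) p'.
  by rewrite crename_id srename_id.
have [c' [st1 ->]] := stepC_of_stepAC wP wP (iso_id P) Hp sL eP stP.
have [[Q0 c0] [stq [/= Q0E Hsim0]]] := simC_step Hsim st1.
rewrite Q0E in stq Hsim0.
have := stepAC_of_stepC wP cP (iso_id P) stq; rewrite crename_id srename_id /= => stA.
eexists; split; first exact: stA.
have wD : wf_poset (delta P L e a) := wf_delta L a wP eP.
split => //; split; first exact: canon_idem.
apply: (simC_iso E_infinite (canon_wf wD) _ Hsim0).
by have := abs_ren_iso a wP wP cP (iso_id P) eP sL; rewrite srename_id.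
Qed.

Lemma simC_simAC O c1 c2 : is_pmark (O, c1) -> simC N O (O, c1) (O, c2) ->
  simAC N A (canon A O) (canon A O, crename (alpha A O) c1)
                        (canon A O, crename (alpha A O) c2).
Proof.
move=> Hc Hsim; have wO : wf_poset O := Hc.1.
exists canon_simC; split; last first.
  split; first exact: canon_idem.
  exact: (simC_iso E_infinite (canon_wf wO) (alpha_iso wO) Hsim).
apply: abisim_sym.
- by move=> P p q [cP H]; split => //; apply: simC_sym.
- by move=> P p q [cP /simC_pmark[]].
- exact: canon_simC_step.
Qed.

Definition simAC_pullback O p q := [/\ p.1 = O, q.1 = O, is_pmark p, is_pmark q &
  exists phi, iso O (canon A O) phi /\
    simAC N A (canon A O) (canon A O, crename phi p.2) (canon A O, crename phi q.2)].

Lemma simAC_pullback_step O p q lb p' : simAC_pullback O p q -> stepC N p lb p' ->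
  exists q', stepC N q lb q' /\ q'.1 = p'.1 /\ simAC_pullback p'.1 p' q'.
Proof.
move=> [pO qO Hp Hq [phi [Hphi Hsim]]].
case: p pO Hp Hsim => _ c1 /= ->; case: q qO Hq => _ c2 /= -> Hq Hp Hsim.
case: lb => K [e a] st; have [_ /= eO sK p'1] := stepC_inv st.
have wO := Hp.1; have wP := canon_wf wO; have cP := canon_idem wO.
have [qA [stqA [_ HsimA]]] := simAC_step Hsim (stepAC_of_stepC wP cP Hphi st).
have [c' [stq qAE]] := stepC_of_stepAC wO wP Hphi Hq sK eO stqA.
exists (delta O K e a, c'); split; first exact: stq.
split; first by rewrite p'1.
split; rewrite ?p'1 //; [exact: stepC_pmark st | exact: stepC_pmark stq|].
exists (abs_ren (canon A O) (srename phi K) a phi e); split.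
  exact: abs_ren_iso.
by move: HsimA; rewrite qAE /= p'1.
Qed.

Lemma simAC_simC O c1 c2 : is_pmark (O, c1) -> is_pmark (O, c2) ->
  simAC N A (canon A O) (canon A O, crename (alpha A O) c1)
                        (canon A O, crename (alpha A O) c2) ->
  simC N O (O, c1) (O, c2).
Proof.
move=> Hc1 Hc2 Hsim; exists simAC_pullback; split; last first.
  by split => //; exists (alpha A O); split => //; apply: alpha_iso Hc1.1.
apply: cbisim_sym.
- move=> O' p q [pO qO Hp Hq [phi [Hphi H]]].
  by split => //; exists phi; split => //; apply: simAC_sym.
- by move=> O' p q [].
- exact: simAC_pullback_step.
Qed.

End AbstractSetting.

Unset Implicit Arguments.

Theorem theorem1 (E Act S T : choiceType)
  (E_infinite : forall X : {fset E}, exists e : E, e \notin X)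
  (N : net Act S T) (HN : wf_net N)
  (A : abs_setting E Act) (HA : wf_setting A)
  (O : poset E Act) (c1 c2 : cmark E Act S)
  (H1 : is_pmark (O, c1)) (H2 : is_pmark (O, c2)) :
  simC N O (O, c1) (O, c2) <->
  simAC N A (canon A O) (canon A O, crename (alpha A O) c1)
                        (canon A O, crename (alpha A O) c2).
Proof.
split; [exact: (simC_simAC E_infinite HA) | exact: (simAC_simC E_infinite HA)].
Qed.
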